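(* Fix an integer $d>2$. Suppose $\Gamma$ is a star whose central vertex is $\alpha_0$ and whose other vertices $\alpha_1,\dots,\alpha_n$ are listed according to the cyclic ordering of the corresponding edges at $\alpha_0$; set $\alpha_{n+1}=\alpha_1$. Then the Brauer graph algebra associated to $(\Gamma,\mathfrak o,\mathfrak m,\mathfrak q)$ (any $\mathfrak q$) is $2$-$d$-homogeneous if and only if $n$ divides $d$, $\mathfrak m(\alpha_0)=\frac dn$, and for every $1\le i\le n$ we have $\mathfrak m(\alpha_i)\in\{1,d\}$ and $\mathfrak m(\alpha_i)\mathfrak m(\alpha_{i+1})\in\{d,d^2\}$.
   Context: Let $K$ be a field. A Brauer graph $(\Gamma,\mathfrak o,\mathfrak m)$ consists of a finite connected graph $\Gamma$ with at least one edge (loops and multiple edges allowed), a multiplicity function $\mathfrak m:\Gamma_0\to\mathbb Z_{>0}$ on the vertex set $\Gamma_0$, and, for each vertex $\alpha$, a cyclic ordering $\mathfrak o$ of the edges incident with $\alpha$ (a loop at $\alpha$ occurs twice in this cyclic ordering, the two occurrences being treated as distinct). The valency $\mathrm{val}(\alpha)$ is the number of edges incident with $\alpha$, loops counted twice. An edge $t$ is the successor of $s$ at $\alpha$ if $t$ directly follows $s$ in the cyclic ordering at $\alpha$ (if $\mathrm{val}(\alpha)=1$ the unique edge is its own successor). An edge $s$ is truncated at $\alpha$ if $\mathrm{val}(\alpha)=1$, $\mathfrak m(\alpha)=1$ and $s$ is the edge at $\alpha$; $s$ is a truncated edge if it is truncated at one of its endpoints. The successor sequence of $s$ at $\alpha$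 is $s=s_0,s_1,\dots,s_{\mathrm{val}(\alpha)-1}$ with $s_{i+1}$ the successor of $s_i$ at $\alpha$. A quantizing function $\mathfrak q$ assigns $\mathfrak q_{s,\alpha}\in K\setminus\{0\}$ to each pair $(s,\alpha)$ with $s$ incident with $\alpha$ and $s$ not truncated at either endpoint; $(\Gamma,\mathfrak o,\mathfrak m,\mathfrak q)$ is a quantized Brauer graph. The Brauer graph algebra $A_\Gamma=KQ_\Gamma/I_\Gamma$ (paths written left to right) is: if $\Gamma=\mathbb A_2$ with both multiplicities $1$, $A_\Gamma=K[x]/(x^2)$. Otherwise $Q_\Gamma$ has a vertex $v_s$ for each edge $s$, and for each vertex $\alpha$ and each occurrence of $t$ as the successor of $s$ at $\alpha$ with $s$ not truncated at $\alpha$, an arrow $v_s\to v_t$. For $s$ at $\alpha$ not truncated at $\alpha$, with successor sequence $s_0,\dots,s_{v-1}$, $v=\mathrm{val}(\alpha)$, $s_v=s_0$, let $C_{s,\alpha}=a_0a_1\cdots a_{v-1}$, where $a_r$ is the arrow for $s_{r+1}$ succeeding $s_r$ at $\alpha$. $I_\Gamma$ is generated by: type one: for each edge $s$ with endpoints $\alpha,\beta$ not truncated at either, $\mathfrak q_{s,\alpha}C_{s,\alpha}^{\mathfrak m(\alpha)}-\mathfrak q_{s,\beta}C_{s,\beta}^{\mathfrak m(\beta)}$; type two: for each edge $s$ truncated at $\alpha$ with other endpoint $\beta$, writing $C_{s,\beta}=b_0b_1\cdots b_{\mathrm{val}(\beta)-1}$, the path $C_{s,\beta}^{\mathfrak m(\beta)}b_0$;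 type three: each path $ab$ of length $2$ in $Q_\Gamma$ that is not a subpath of any $C_{t,\gamma}$. A star is a tree with a central vertex joined by $n\ge1$ edges to $n$ vertices of valency $1$. For distinct integers $d,d'\ge2$, $KQ/I$ is $d$-$d'$-homogeneous if $I$ has a minimal generating set consisting of length-homogeneous elements each of length $d$ or $d'$, and the algebra is neither $d$-homogeneous nor $d'$-homogeneous (i.e. not generated by elements of a single one of these lengths). *)

From HB Require Import structures.
From mathcomp Require Import all_boot all_order all_algebra.
Set Implicit Arguments. Unset Strict Implicit. Unset Printing Implicit Defensive.
Import GRing.Theory.
Local Open Scope ring_scope.

(* Path algebras KQ of finite quivers, elements as finitely supported  *)
(* coefficient functions on paths; paths written left to right.       *)

Record quiver := Quiver {
  qV : eqType;
  qA : eqType;                 (* candidate arrows *)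
  qsrc : qA -> qV;
  qtgt : qA -> qV;
  qarrow : qA -> bool          (* which candidates really are arrows of Q *)
}.

Definition qpath (Q : quiver) := (qV Q * seq (qA Q))%type.

Definition plen (Q : quiver) (p : qpath Q) : nat := size p.2.

Definition ptgt (Q : quiver) (p : qpath Q) : qV Q := last p.1 (map (@qtgt Q) p.2).

Fixpoint composable (Q : quiver) (v : qV Q) (s : seq (qA Q)) : bool :=
  match s with
  | [::] => true
  | a :: s' => (qsrc a == v) && qarrow a && composable (qtgt a) s'
  end.

Definition pvalid (Q : quiver) (p : qpath Q) : bool := composable p.1 p.2.

Definition kq_elem (K : fieldType) (Q : quiver) (f : qpath Q -> K) : Prop :=
  (exists supp : seq (qpath Q), forall p, f p != 0 -> p \in supp) /\
  (forall p, f p != 0 -> pvalid p).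

Definition kq_zero (K : fieldType) (Q : quiver) : qpath Q -> K := fun _ => 0.
Definition kq_add (K : fieldType) (Q : quiver) (f g : qpath Q -> K) : qpath Q -> K :=
  fun p => f p + g p.
Definition kq_scale (K : fieldType) (Q : quiver) (c : K) (f : qpath Q -> K) : qpath Q -> K :=
  fun p => c * f p.
Definition kq_mul (K : fieldType) (Q : quiver) (f g : qpath Q -> K) : qpath Q -> K :=
  fun p => if pvalid p then
             \sum_(k < (size p.2).+1)
               f (p.1, take k p.2) * g (ptgt (p.1, take k p.2), drop k p.2)
           else 0.

Definition kq_path (K : fieldType) (Q : quiver) (p : qpath Q) : qpath Q -> K :=
  fun p' => if p' == p then 1 else 0.
Arguments kq_path {K Q} p _.

Inductive in_ideal (K : fieldType) (Q : quiver) (S : (qpath Q -> K) -> Prop)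
  : (qpath Q -> K) -> Prop :=
| ideal_gen x : S x -> in_ideal S x
| ideal_zero : in_ideal S (@kq_zero K Q)
| ideal_add x y : in_ideal S x -> in_ideal S y -> in_ideal S (kq_add x y)
| ideal_scale c x : in_ideal S x -> in_ideal S (kq_scale c x)
| ideal_lmul a x : kq_elem a -> in_ideal S x -> in_ideal S (kq_mul a x)
| ideal_rmul x b : kq_elem b -> in_ideal S x -> in_ideal S (kq_mul x b).

Definition generates (K : fieldType) (Q : quiver) (S I : (qpath Q -> K) -> Prop) : Prop :=
  (forall x, S x -> kq_elem x) /\ (forall x, in_ideal S x <-> I x).

Definition minimal_generating (K : fieldType) (Q : quiver) (S I : (qpath Q -> K) -> Prop) : Prop :=
  generates S I /\
  forall S' : (qpath Q -> K) -> Prop,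
    (forall x, S' x -> S x) -> generates S' I -> forall x, S x -> S' x.

Definition len_homogeneous (K : fieldType) (Q : quiver) (l : nat) (x : qpath Q -> K) : Prop :=
  forall p, x p != 0 -> plen p = l.

(* KQ/I is d-homogeneous: I generated by length-homogeneous elements of length d *)
Definition homogeneous_alg (K : fieldType) (Q : quiver) (I : (qpath Q -> K) -> Prop) (d : nat) : Prop :=
  exists S, generates S I /\ forall x, S x -> len_homogeneous d x.

Definition homogeneous2_alg (K : fieldType) (Q : quiver) (I : (qpath Q -> K) -> Prop)
    (d d' : nat) : Prop :=
  (exists S, minimal_generating S I /\
     forall x, S x -> len_homogeneous d x \/ len_homogeneous d' x) /\
  ~ homogeneous_alg I d /\ ~ homogeneous_alg I d'.

(* Brauer graphs, encoded by half-edges (occurrences of an edge at an  *)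
(* endpoint): hopp = other occurrence of the same edge, hsucc = the    *)
(* occurrence following it in the cyclic ordering at its vertex.       *)

Record bgraph := BGraph {
  bV : finType;
  bE : finType;
  bH : finType;
  hvert : bH -> bV;
  hedge : bH -> bE;
  hopp : bH -> bH;
  hsucc : bH -> bH
}.

Section BrauerGraphAlgebra.
Variables (K : fieldType) (G : bgraph) (m : bV G -> nat) (q : bE G -> bV G -> K).

Definition valency (a : bV G) : nat := #|[pred h | hvert h == a]|.

Definition htrunc (h : bH G) : bool := (valency (hvert h) == 1%N) && (m (hvert h) == 1%N).

(* quiver Q_Gamma: vertex v_s per edge s; arrow per non-truncated occurrence *)
Definition bg_quiver : quiver :=
  @Quiver (bE G) (bH G) (@hedge G) (fun h => hedge (hsucc h)) (fun h => ~~ htrunc h).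

(* C_{s,alpha}: the successor sequence of arrows starting at occurrence h *)
Definition cyc_word (h : bH G) : seq (bH G) :=
  [seq iter r (@hsucc G) h | r <- iota 0 (valency (hvert h))].

Definition cyc_pow (h : bH G) (k : nat) : qpath bg_quiver :=
  (hedge h, flatten (nseq k (cyc_word h))).

Definition qcoef (h : bH G) : K := q (hedge h) (hvert h).

Definition bg_relations : (qpath bg_quiver -> K) -> Prop := fun x =>
  (exists h, ~~ htrunc h /\ ~~ htrunc (hopp h) /\
     x = kq_add (kq_scale (qcoef h) (kq_path (cyc_pow h (m (hvert h)))))
                (kq_scale (- qcoef (hopp h))
                          (kq_path (cyc_pow (hopp h) (m (hvert (hopp h))))))) \/
  (exists h, htrunc h /\
     x = kq_path ((hedge (hopp h),
                  (cyc_pow (hopp h) (m (hvert (hopp h)))).2 ++ [:: hopp h]) : qpath bg_quiver)) \/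
  (* type three: paths ab of length 2 not a subpath of any C_{t,gamma} *)
  (exists h h', ~~ htrunc h /\ ~~ htrunc h' /\ hedge (hsucc h) = hedge h' /\
     h' <> hsucc h /\ x = kq_path ((hedge h, [:: h; h']) : qpath bg_quiver)).

Definition bg_ideal : (qpath bg_quiver -> K) -> Prop := in_ideal bg_relations.

(* Gamma = A_2 with both multiplicities 1 *)
Definition bg_special : bool :=
  (#|bE G| == 1%N) && (#|bV G| == 2%N) && [forall a, m a == 1%N].

End BrauerGraphAlgebra.
Arguments bg_relations {K G} m q _.
Arguments bg_ideal {K G} m q _.
Arguments bg_quiver {G} m.

(* K[x]/(x^2) as a quiver algebra: one vertex, one loop *)
Definition loop_quiver : quiver := @Quiver unit unit (fun _ => tt) (fun _ => tt) (fun _ => true).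

Definition loop_ideal (K : fieldType) : (qpath loop_quiver -> K) -> Prop :=
  in_ideal (fun x => x = kq_path ((tt, [:: tt; tt]) : qpath loop_quiver)).

Definition bga_homogeneous2 (K : fieldType) (G : bgraph) (m : bV G -> nat)
    (q : bE G -> bV G -> K) (d d' : nat) : Prop :=
  if bg_special m then homogeneous2_alg (@loop_ideal K) d d'
  else homogeneous2_alg (bg_ideal m q) d d'.

Definition quantizing (K : fieldType) (G : bgraph) (m : bV G -> nat)
    (q : bE G -> bV G -> K) : Prop :=
  forall h : bH G, ~~ htrunc m h -> ~~ htrunc m (hopp h) -> q (hedge h) (hvert h) != 0.

(* The star with n edges: vertex 0 = alpha_0 (centre), vertex i+1 =    *)
(* alpha_(i+1) (leaf), edge i joins alpha_0 and alpha_(i+1); the cyclic *)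
(* ordering at alpha_0 is edge 0, edge 1, ..., edge n-1.                *)
(* Half-edges: inl i = edge i at alpha_0, inr i = edge i at its leaf.   *)

Definition star_vert (n : nat) (h : 'I_n + 'I_n) : 'I_n.+1 :=
  match h with inl _ => ord0 | inr i => lift ord0 i end.
Definition star_edge (n : nat) (h : 'I_n + 'I_n) : 'I_n :=
  match h with inl i => i | inr i => i end.
Definition star_opp (n : nat) (h : 'I_n + 'I_n) : 'I_n + 'I_n :=
  match h with inl i => inr i | inr i => inl i end.
Definition star_succ (n : nat) (h : 'I_n + 'I_n) : 'I_n + 'I_n :=
  match h with inl i => inl (ordS i) | inr i => inr i end.

Definition star (n : nat) : bgraph :=
  @BGraph 'I_n.+1 'I_n ('I_n + 'I_n)%type
    (@star_vert n) (@star_edge n) (@star_opp n) (@star_succ n).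

Definition leaf (n : nat) (i : 'I_n) : 'I_n.+1 := lift ord0 i.

From HB Require Import structures.
From mathcomp Require Import all_boot all_order all_algebra.
From mathcomp Require Import zify ring.
From Stdlib Require Import FunctionalExtensionality.
Import GRing.Theory.
Set Implicit Arguments. Unset Strict Implicit. Unset Printing Implicit Defensive.

(* If the centre or every
   leaf is truncated, all relations are monomials of one length.  Otherwise the
   commutativity relation of a non-truncated edge forces a generator containing
   its centre cycle and its leaf cycle, and a truncated leaf forces its successor
   to be non-truncated; conversely the commutativity relations and the length-2
   monomials form a minimal generating set. *)

Definition proper_infix (T : eqType) (w s : seq T) : bool := infix w s && (size w < size s).

Lemma proper_infix_trans (T : eqType) (w' w s : seq T) :
  infix w' w -> proper_infix w s -> proper_infix w' s.
Proof.
move=> Hw' /andP[Hw Hs]; rewrite /proper_infix (infix_trans Hw' Hw).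
exact: leq_ltn_trans (size_infix Hw') Hs.
Qed.

Lemma infix_has (T : eqType) (P : pred T) (w s : seq T) : infix w s -> has P w -> has P s.
Proof. by move=> /mem_infix sub /hasP[x /sub xs Px]; apply/hasP; exists x. Qed.

Lemma infix_size_eq (T : eqType) (w s : seq T) : infix w s -> size w = size s -> w = s.
Proof.
move=> /infixP[u [v ->]]; rewrite !size_cat => E.
have : (size u + size v == 0)%N by apply/eqP; lia.
by rewrite addn_eq0 !size_eq0 => /andP[/eqP -> /eqP ->]; rewrite cats0.
Qed.

Lemma traject_iota (T : Type) (f : T -> T) (x : T) (k : nat) :
  [seq iter r f x | r <- iota 0 k] = traject f x k.
Proof.
apply: (@eq_from_nth _ x); rewrite ?size_map ?size_iota ?size_traject // => r Hr.
by rewrite (nth_map 0%N) ?size_iota // nth_iota // nth_traject.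
Qed.

Section PathAlgebra.
Variables (K : fieldType) (Q : quiver).
Local Open Scope ring_scope.
Implicit Types (x y a b r : qpath Q -> K) (p u : qpath Q) (R S I : (qpath Q -> K) -> Prop).

Lemma kq_add_supp x y p : kq_add x y p != 0 -> x p != 0 \/ y p != 0.
Proof.
rewrite /kq_add; have [->|] := eqVneq (x p) 0; last by left.
by rewrite add0r; right.
Qed.

Lemma kq_scale_supp c x p : kq_scale c x p != 0 -> x p != 0.
Proof. by rewrite /kq_scale mulf_eq0 negb_or => /andP[]. Qed.

Lemma kq_path_supp p0 p : (kq_path p0 : qpath Q -> K) p != 0 -> p = p0.
Proof. by rewrite /kq_path; case: (p =P p0) => // _; rewrite eqxx. Qed.

Lemma kq_path_self p : (kq_path p : qpath Q -> K) p != 0.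
Proof. by rewrite /kq_path eqxx oner_neq0. Qed.

Lemma kq_path_other p0 p : p <> p0 -> (kq_path p0 : qpath Q -> K) p = 0.
Proof. by rewrite /kq_path; case: eqP. Qed.

Lemma kq_mul_supp a x p : kq_mul a x p != 0 ->
  pvalid p /\ exists k, a (p.1, take k p.2) != 0 /\
                        x (ptgt (p.1, take k p.2), drop k p.2) != 0.
Proof.
rewrite /kq_mul; case: ifP => [Vp Hsum|_]; last by rewrite eqxx.
split=> //; have [k Hk] : exists k : 'I_(size p.2).+1,
    a (p.1, take k p.2) * x (ptgt (p.1, take k p.2), drop k p.2) != 0.
  apply/existsP; apply: contraNT Hsum => /existsPn H.
  by rewrite big1 // => k _; apply/eqP/negbNE/H.
by exists k; move: Hk; rewrite mulf_eq0 negb_or => /andP[].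
Qed.

Lemma ideal_support_closed R (P : seq (qA Q) -> Prop) :
  (forall l s t, P s -> P (l ++ s ++ t)) ->
  (forall r p, R r -> r p != 0 -> P p.2) ->
  forall x, in_ideal R x -> forall p, x p != 0 -> P p.2.
Proof.
move=> Pext PR x; elim=> {x} [x Rx p|p|x y _ IHx _ IHy p|c x _ IH p|a x _ _ IH p|x b _ _ IH p].
- exact: PR.
- by rewrite /kq_zero eqxx.
- by case/kq_add_supp=> [/IHx|/IHy].
- by move/kq_scale_supp; apply: IH.
- move=> /kq_mul_supp[_ [k [_ /IH]]] /= /(Pext (take k p.2) _ [::]).
  by rewrite cats0 cat_take_drop.
- move=> /kq_mul_supp[_ [k [/IH /= /(Pext [::] _ (drop k p.2))]]].
  by rewrite cat_take_drop.
Qed.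

Lemma ideal_support_valid R :
  (forall r p, R r -> r p != 0 -> pvalid p) ->
  forall x, in_ideal R x -> forall p, x p != 0 -> pvalid p.
Proof.
move=> VR x; elim=> {x} [x Rx p|p|x y _ IHx _ IHy p|c x _ IH p|a x _ _ IH p|x b _ _ IH p].
- exact: VR.
- by rewrite /kq_zero eqxx.
- by case/kq_add_supp=> [/IHx|/IHy].
- by move/kq_scale_supp; apply: IH.
- by case/kq_mul_supp.
- by case/kq_mul_supp.
Qed.

Lemma ideal_mono S R : (forall x, S x -> in_ideal R x) -> forall y, in_ideal S y -> in_ideal R y.
Proof.
move=> SR y; elim=> {y} [x /SR //||x y _ ? _ ?|c x _ ?|a x ? _ ?|x b ? _ ?].
- exact: ideal_zero.
- exact: ideal_add.
- exact: ideal_scale.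
- exact: ideal_lmul.
- exact: ideal_rmul.
Qed.

Lemma kq_mul_proper_l a x p : pvalid p ->
  (forall v w, proper_infix w p.2 -> x (v, w) = 0) -> kq_mul a x p = a (p.1, [::]) * x p.
Proof.
case: p => v s /= Vp Hx; rewrite /kq_mul Vp big_ord_recl /= take0 drop0 big1 ?addr0 // => k _.
rewrite Hx ?mulr0 // /proper_infix infix_drop size_drop /bump /=; have := ltn_ord k; lia.
Qed.

Lemma kq_mul_proper_r x b p : pvalid p ->
  (forall v w, proper_infix w p.2 -> x (v, w) = 0) -> kq_mul x b p = x p * b (ptgt p, [::]).
Proof.
case: p => v s /= Vp Hx; rewrite /kq_mul Vp big_ord_recr /= take_size drop_size big1 ?add0r //.
move=> k _; rewrite Hx ?mul0r // /proper_infix infix_take size_take ltn_ord.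
by case: k => k /= ->.
Qed.

Lemma ideal_balanced R pC pB (c1 c2 : K) :
  pC.1 = pB.1 -> ptgt pC = ptgt pB -> pvalid pC -> pvalid pB ->
  (forall r v w, R r -> proper_infix w pC.2 || proper_infix w pB.2 -> r (v, w) = 0) ->
  (forall r, R r -> c1 * r pC + c2 * r pB = 0) ->
  forall x, in_ideal R x ->
    (forall v w, proper_infix w pC.2 || proper_infix w pB.2 -> x (v, w) = 0) /\
    c1 * x pC + c2 * x pB = 0.
Proof.
move=> E1 E2 VC VB R0 Rbal x.
have factor_closed w' w : infix w' w ->
    proper_infix w pC.2 || proper_infix w pB.2 -> proper_infix w' pC.2 || proper_infix w' pB.2.
  by move=> Hw' /orP[] /(proper_infix_trans Hw') ->; rewrite ?orbT.
elim=> {x} [x Rx|||c x _ [H0 Hb]|a x _ _ [H0 Hb]|x b _ _ [H0 Hb]].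
- by split=> [v w|]; [apply: R0 | apply: Rbal].
- by split=> [v w _|]; rewrite /kq_zero ?mulr0 ?addr0.
- move=> x y _ [Hx0 Hxb] _ [Hy0 Hyb]; split=> [v w F|].
    by rewrite /kq_add Hx0 ?Hy0 ?addr0.
  by rewrite /kq_add !mulrDr addrACA Hxb Hyb addr0.
- split=> [v w F|]; first by rewrite /kq_scale H0 ?mulr0.
  by rewrite /kq_scale mulrCA [c2 * _]mulrCA -mulrDr Hb mulr0.
- split=> [v w F|].
    apply/eqP; apply: contraT => /kq_mul_supp[_ [k [_]]].
    by rewrite H0 ?eqxx //= (factor_closed _ _ (infix_drop _ _) F).
  rewrite (kq_mul_proper_l _ VC) => [|v w F]; last by apply: H0; rewrite F.
  rewrite (kq_mul_proper_l _ VB) => [|v w F]; last by apply: H0; rewrite F orbT.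
  by rewrite E1 mulrCA [c2 * _]mulrCA -mulrDr Hb mulr0.
- split=> [v w F|].
    apply/eqP; apply: contraT => /kq_mul_supp[_ [k []]].
    by rewrite H0 ?eqxx //= (factor_closed _ _ (infix_take _ _) F).
  rewrite (kq_mul_proper_r _ VC) => [|v w F]; last by apply: H0; rewrite F.
  rewrite (kq_mul_proper_r _ VB) => [|v w F]; last by apply: H0; rewrite F orbT.
  by rewrite E2 !mulrA -mulrDl Hb mul0r.
Qed.

Lemma composable_cat (v : qV Q) (s1 s2 : seq (qA Q)) :
  composable v (s1 ++ s2) = composable v s1 && composable (last v (map (@qtgt Q) s1)) s2.
Proof. by elim: s1 v => [|c s1 IH] v //=; rewrite IH !andbA. Qed.

Lemma pvalid_src (v : qV Q) (c : qA Q) (s : seq (qA Q)) : pvalid (v, c :: s) -> v = qsrc c.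
Proof. by rewrite /pvalid /= => /andP[/andP[/eqP]]. Qed.

Lemma kq_mul_path u p : pvalid u -> pvalid p -> ptgt u = p.1 ->
  kq_mul (kq_path u : qpath Q -> K) (kq_path p) = kq_path ((u.1, u.2 ++ p.2) : qpath Q).
Proof.
case: u => u1 u2; case: p => p1 p2 /= Vu Vp Et.
apply: functional_extensionality => -[r1 r2]; rewrite /kq_mul /kq_path /=.
case Hv: (pvalid (r1, r2)); last first.
  case: eqP => // -[E1 E2]; move: Hv; rewrite /pvalid /= E1 E2 composable_cat.
  by rewrite /pvalid /ptgt /= in Vu Vp Et *; rewrite Vu Et Vp.
case: eqP => [[-> ->]|Hne].
  have Hk : (size u2 < (size (u2 ++ p2)).+1)%N by rewrite size_cat ltnS leq_addr.
  rewrite (bigD1 (Ordinal Hk)) //= take_size_cat // drop_size_cat // eqxx.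
  rewrite /ptgt /= in Et; rewrite /ptgt /= Et eqxx mulr1 big1 ?addr0 // => i /eqP Hi.
  case: eqP => [[Ht]|]; last by rewrite mul0r.
  exfalso; apply: Hi; apply: val_inj => /=; move: (congr1 size Ht); rewrite size_take.
  have := ltn_ord i; rewrite ltnS leq_eqVlt => /orP[/eqP ->|-> //].
  by rewrite ltnn size_cat.
rewrite big1 // => i _.
case: eqP => [[E1 E2]|]; last by rewrite mul0r.
case: eqP => [[_ E3]|]; last by rewrite mulr0.
by exfalso; apply: Hne; rewrite E1 -E2 -E3 /= cat_take_drop.
Qed.

Lemma kq_mul_addr a x y : kq_mul a (kq_add x y) = kq_add (kq_mul a x) (kq_mul a y).
Proof.
apply: functional_extensionality => p; rewrite /kq_mul /kq_add.
case: ifP => _; last by rewrite addr0.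
by rewrite -big_split; apply: eq_bigr => i _; rewrite mulrDr.
Qed.

Lemma kq_mul_scaler a c x : kq_mul a (kq_scale c x) = kq_scale c (kq_mul a x).
Proof.
apply: functional_extensionality => p; rewrite /kq_mul /kq_scale.
case: ifP => _; last by rewrite mulr0.
by rewrite mulr_sumr; apply: eq_bigr => i _; rewrite mulrCA.
Qed.

Lemma kq_scale1 x : kq_scale 1 x = x.
Proof. by apply: functional_extensionality => p; rewrite /kq_scale mul1r. Qed.

Lemma kq_elem_path p : pvalid p -> kq_elem (kq_path p : qpath Q -> K).
Proof.
move=> Vp; split; first by exists [:: p] => p' /kq_path_supp ->; rewrite inE.
by move=> p' /kq_path_supp ->.
Qed.

Lemma kq_elem_add x y : kq_elem x -> kq_elem y -> kq_elem (kq_add x y).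
Proof.
move=> [[s1 H1] V1] [[s2 H2] V2]; split.
  by exists (s1 ++ s2) => p /kq_add_supp[/H1|/H2]; rewrite mem_cat => ->; rewrite ?orbT.
by move=> p /kq_add_supp[/V1|/V2].
Qed.

Lemma kq_elem_scale c x : kq_elem x -> kq_elem (kq_scale c x).
Proof. by move=> [[s H] V]; split; [exists s => p /kq_scale_supp /H | move=> p /kq_scale_supp /V]. Qed.

Lemma kq_path_homogeneous p : len_homogeneous (plen p) (kq_path p : qpath Q -> K).
Proof. by move=> p' /kq_path_supp ->. Qed.

Lemma generates_mem S I x : generates S I -> S x -> I x.
Proof. by move=> [_ HS] Sx; apply/HS/ideal_gen. Qed.

Lemma generator_factor S I x p : generates S I -> I x -> x p != 0 ->
  exists s v w, [/\ S s, s (v, w) != 0 & infix w p.2].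
Proof.
move=> [_ HS] /HS Ix Hp.
apply: (ideal_support_closed
  (P := fun t => exists s v w, [/\ S s, s (v, w) != 0 & infix w t]) _ _ Ix Hp).
  move=> l t t' [s [v [w [Ss Hs Hw]]]].
  by exists s, v, w; split=> //; apply: infix_trans Hw (infix_infix _ _ _).
by move=> s [v w] Ss Hs; exists s, v, w; split=> //; apply: infix_refl.
Qed.

Lemma short_element_not_homogeneous I x p L :
  I x -> x p != 0 -> (plen p < L)%N -> ~ homogeneous_alg I L.
Proof.
move=> Ix Hp HL [S [HS Sh]]; have [s [v [w [Ss Hs Hw]]]] := generator_factor HS Ix Hp.
by move: (size_infix Hw) HL; rewrite /plen -(Sh s Ss _ Hs) /plen /=; lia.
Qed.

Lemma homogeneous_of_relations R L d d' S :
  (forall r, R r -> kq_elem r) -> (forall r, R r -> len_homogeneous L r) ->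
  (exists r0 p0, R r0 /\ r0 p0 != 0) ->
  generates S (in_ideal R) ->
  (forall s, S s -> len_homogeneous d s \/ len_homogeneous d' s) ->
  homogeneous_alg (in_ideal R) d \/ homogeneous_alg (in_ideal R) d'.
Proof.
move=> Relem Rhom [r0 [p0 [R0 H0]]] HS Sh.
have [s [v [w [Ss Hs Hw]]]] := generator_factor HS (ideal_gen R0) H0.
have long : (L <= size w)%N.
  have Is := generates_mem HS Ss.
  apply: (ideal_support_closed (P := fun t => L <= size t)%N) Is _ Hs.
    by move=> l t t' /leq_trans; apply; rewrite !size_cat addnCA leq_addr.
  by move=> r p Rr Hr; rewrite -(Rhom r Rr p Hr).
have Ew : size w = L.
  by apply/eqP; rewrite eqn_leq long -(Rhom r0 R0 p0 H0) size_infix.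
have HL : homogeneous_alg (in_ideal R) L by exists R; split.
by case: (Sh s Ss) => /(_ (v, w) Hs); rewrite /plen /= Ew => <-; [left|right].
Qed.

Lemma minimal_of_witness S I : generates S I ->
  (forall x, S x -> exists p, x p != 0 /\
     forall s v w, S s -> s (v, w) != 0 -> infix w p.2 -> s = x) ->
  minimal_generating S I.
Proof.
move=> HS wit; split=> // S' S'S HS' x Sx; have [p [Hp uniq_x]] := wit x Sx.
have [s [v [w [S's Hs Hw]]]] := generator_factor HS' (generates_mem HS Sx) Hp.
by rewrite -(uniq_x s v w (S'S s S's) Hs Hw).
Qed.

End PathAlgebra.
Arguments kq_path_self {K Q} p.
Arguments kq_path_other {K Q p0 p}.

Section Star.
Variables (K : fieldType) (n : nat) (m : 'I_n.+1 -> nat) (q : 'I_n -> 'I_n.+1 -> K).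
Hypothesis m_gt0 : forall a, (0 < m a)%N.
Local Notation G := (star n).
Local Notation Q := (bg_quiver (G:=G) m).
Local Notation HE := ('I_n + 'I_n)%type.
Local Notation ht := (@htrunc G m).
Local Notation I := (@bg_ideal K G m q).
Local Notation R := (@bg_relations K G m q).

Lemma iter_ordS_n (i : 'I_n) : iter n (@ordS n) i = i.
Proof.
have val_iter r : val (iter r (@ordS n) i) = (i + r) %% n.
  elim: r => [|r IH] /=; first by rewrite addn0 modn_small.
  by rewrite -addn1 IH modnDml addn1 addnS.
by apply: val_inj; rewrite val_iter modnDr modn_small.
Qed.

Lemma ordS_other (i j : 'I_n) : (n <= 2)%N -> j != i -> ordS j = i.
Proof.
move=> n_le2 /eqP ji; apply: val_inj => /=; move: (ltn_ord i) (ltn_ord j) => Hi Hj.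
have ji' : nat_of_ord j <> nat_of_ord i by move=> E; apply: ji; apply: val_inj.
case: (ltnP j.+1 n) => Hjn; first by rewrite modn_small //; lia.
have -> : j.+1 = n by lia.
by rewrite modnn; lia.
Qed.

Lemma valency_centre : valency (G:=G) ord0 = n.
Proof.
rewrite /valency -sum1_card big_sumType /= (eq_bigl xpredT) ?sum1_card ?card_ord //.
by rewrite card0 addn0.
Qed.

Lemma valency_leaf (i : 'I_n) : valency (G:=G) (leaf i) = 1%N.
Proof.
rewrite /valency -sum1_card big_sumType /= big_pred0 => [|j]; last first.
  by rewrite inE /= /leaf (negbTE (neq_lift _ _)).
by rewrite (big_pred1 i) // => j; rewrite inE /= /leaf (inj_eq (@lift_inj _ _)).
Qed.

Definition centre_truncated : bool := (n == 1%N) && (m ord0 == 1%N).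

Lemma htrunc_inl (i : 'I_n) : ht (inl i) = centre_truncated.
Proof. by rewrite /htrunc /= valency_centre. Qed.

Lemma htrunc_inr (i : 'I_n) : ht (inr i) = (m (leaf i) == 1%N).
Proof. by rewrite /htrunc /= valency_leaf. Qed.

Definition centre_word (i : 'I_n) : seq HE := (cyc_pow (G:=G) m (inl i) (m ord0)).2.
Definition leaf_word (i : 'I_n) : seq HE := (cyc_pow (G:=G) m (inr i) (m (leaf i))).2.
Definition centre_path (i : 'I_n) : qpath Q := (i, centre_word i).
Definition leaf_path (i : 'I_n) : qpath Q := (i, leaf_word i).

Definition centre_len : nat := (n * m ord0)%N.

Definition is_leaf_arrow (h : HE) : bool := if h is inr _ then true else false.
Definition is_centre_arrow (h : HE) : bool := if h is inl _ then true else false.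

Lemma iter_ordS_mul (k : nat) (i : 'I_n) : iter (n * k) (@ordS n) i = i.
Proof. by elim: k => [|k IH]; rewrite ?muln0 // mulnS iterD IH iter_ordS_n. Qed.

Lemma centre_wordE (i : 'I_n) : centre_word i = map inl (traject (@ordS n) i centre_len).
Proof.
have cycle : cyc_word (G:=G) (inl i) = map inl (traject (@ordS n) i n).
  rewrite /cyc_word /= valency_centre -traject_iota -map_comp.
  by apply: eq_map => r /=; elim: r => //= r ->.
rewrite /centre_word /cyc_pow /= cycle /centre_len; elim: (m ord0) => [|k IH] /=.
  by rewrite muln0.
by rewrite IH mulnS trajectD iter_ordS_n map_cat.
Qed.

Lemma leaf_wordE (i : 'I_n) : leaf_word i = nseq (m (leaf i)) (inr i).
Proof. by rewrite /leaf_word /cyc_pow /cyc_word /= valency_leaf; elim: (m _) => //= k ->. Qed.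

Lemma size_centre_word (i : 'I_n) : size (centre_word i) = centre_len.
Proof. by rewrite centre_wordE size_map size_traject. Qed.

Lemma size_leaf_word (i : 'I_n) : size (leaf_word i) = m (leaf i).
Proof. by rewrite leaf_wordE size_nseq. Qed.

Lemma centre_word_no_leaf (i : 'I_n) : has is_leaf_arrow (centre_word i) = false.
Proof. by rewrite centre_wordE has_map; apply/hasPn. Qed.

Lemma leaf_word_no_centre (i : 'I_n) : has is_centre_arrow (leaf_word i) = false.
Proof. by rewrite leaf_wordE has_nseq andbF. Qed.

Lemma leaf_word_has_leaf (i : 'I_n) : has is_leaf_arrow (leaf_word i).
Proof. by rewrite leaf_wordE has_nseq m_gt0. Qed.

Lemma centre_len_gt0 (i : 'I_n) : (0 < centre_len)%N.
Proof. by rewrite muln_gt0 m_gt0 andbT (leq_ltn_trans _ (ltn_ord i)). Qed.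

Lemma centre_word_head (i : 'I_n) : exists t, centre_word i = inl i :: t.
Proof.
by rewrite centre_wordE -(prednK (centre_len_gt0 i)) trajectS; eexists.
Qed.

Lemma centre_word_rot (i : 'I_n) : centre_word i ++ [:: inl i] = inl i :: centre_word (ordS i).
Proof.
rewrite !centre_wordE -[[:: inl i]]/(map inl [:: i]) -map_cat -map_cons -trajectS.
by rewrite cats1 trajectSr iter_ordS_mul.
Qed.

Lemma centre_word_inj (i j : 'I_n) : centre_word i = centre_word j -> i = j.
Proof. by have [t ->] := centre_word_head i; have [t' ->] := centre_word_head j; case. Qed.

Lemma centre_word_has_centre (i : 'I_n) : has is_centre_arrow (centre_word i).
Proof. by have [t ->] := centre_word_head i. Qed.

Lemma centre_walk (i : 'I_n) (k : nat) : ~~ centre_truncated ->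
  composable (Q:=Q) i (map inl (traject (@ordS n) i k)) /\
  last i (map (@qtgt Q) (map inl (traject (@ordS n) i k))) = iter k (@ordS n) i.
Proof.
move=> nct; elim: k i => [|k IH] i //=; have [C L] := IH (ordS i).
by rewrite eqxx /qarrow /= htrunc_inl nct C L -iterS iterSr.
Qed.

Lemma leaf_walk (i : 'I_n) (k : nat) : ~~ ht (inr i) ->
  composable (Q:=Q) i (nseq k (inr i)) /\ last i (map (@qtgt Q) (nseq k (inr i))) = i.
Proof. by move=> nt; elim: k => [|k [C L]] //=; rewrite eqxx /qarrow /= nt C L. Qed.

Lemma centre_path_valid (i : 'I_n) : ~~ centre_truncated ->
  pvalid (centre_path i) /\ ptgt (centre_path i) = i.
Proof.
move=> nct; rewrite /pvalid /ptgt /= centre_wordE.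
by have [-> ->] := centre_walk i centre_len nct; rewrite iter_ordS_mul.
Qed.

Lemma leaf_path_valid (i : 'I_n) : ~~ ht (inr i) ->
  pvalid (leaf_path i) /\ ptgt (leaf_path i) = i.
Proof. by move=> nt; rewrite /pvalid /ptgt /= leaf_wordE; apply: leaf_walk. Qed.

Local Open Scope ring_scope.

Definition comm_rel (i : 'I_n) : qpath Q -> K :=
  kq_add (kq_scale (qcoef (G:=G) q (inr i)) (kq_path (leaf_path i)))
         (kq_scale (- qcoef (G:=G) q (inl i)) (kq_path (centre_path i))).

Definition trunc_leaf_path (i : 'I_n) : qpath Q := (i, centre_word i ++ [:: inl i]).
Definition trunc_centre_path (i : 'I_n) : qpath Q := (i, leaf_word i ++ [:: inr i]).
Definition centre_leaf_path (j : 'I_n) : qpath Q := (j, [:: inl j; inr (ordS j)]).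
Definition leaf_centre_path (j : 'I_n) : qpath Q := (j, [:: inr j; inl j]).

Inductive star_rel : (qpath Q -> K) -> Prop :=
| star_comm i : ~~ centre_truncated -> ~~ ht (inr i) -> star_rel (comm_rel i)
| star_comm_opp i : ~~ centre_truncated -> ~~ ht (inr i) ->
    star_rel (kq_scale (-1) (comm_rel i))
| star_trunc_leaf i : ht (inr i) -> star_rel (kq_path (trunc_leaf_path i))
| star_trunc_centre i : centre_truncated -> star_rel (kq_path (trunc_centre_path i))
| star_centre_leaf j : ~~ centre_truncated -> ~~ ht (inr (ordS j)) ->
    star_rel (kq_path (centre_leaf_path j))
| star_leaf_centre j : ~~ centre_truncated -> ~~ ht (inr j) ->
    star_rel (kq_path (leaf_centre_path j)).

Lemma star_relE r : R r <-> star_rel r.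
Proof.
split.
  case=> [[[i|i] [H1 [H2 ->]]] | [[[i|i] [H1 ->]] | [[j|j] [[k|k] [H1 [H2 [H3 [H4 ->]]]]]]]].
  - rewrite /= htrunc_inl in H1.
    rewrite (_ : kq_add _ _ = kq_scale (-1) (comm_rel i)); first exact: star_comm_opp.
    by apply: functional_extensionality => p; rewrite /comm_rel /kq_add /kq_scale; ring.
  - by rewrite /= htrunc_inl in H2; apply: star_comm.
  - by rewrite htrunc_inl in H1; apply: star_trunc_centre.
  - exact: star_trunc_leaf.
  - by case: H4; move: H3 => /= ->.
  - move: H1 H3; rewrite htrunc_inl /= => nct Ek; rewrite -Ek in H2 *.
    exact: star_centre_leaf.
  - move: H2 H3; rewrite htrunc_inl /= => nct Ek; rewrite -Ek in H1 *.
    exact: star_leaf_centre.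
  - by case: H4; move: H3 => /= ->.
case=> [i nct nt|i nct nt|i t|i ct|j nct nt|j nct nt].
- by left; exists (inr i); rewrite /= htrunc_inl.
- left; exists (inl i); rewrite /= htrunc_inl; do 2!split=> //.
  by apply: functional_extensionality => p; rewrite /comm_rel /kq_add /kq_scale /=; ring.
- by right; left; exists (inr i).
- by right; left; exists (inl i); rewrite htrunc_inl.
- by right; right; exists (inl j), (inr (ordS j)); rewrite htrunc_inl.
- by right; right; exists (inr j), (inl j); rewrite htrunc_inl.
Qed.

Lemma special_centre_truncated : bg_special (G:=G) m -> centre_truncated.
Proof. by rewrite /bg_special /centre_truncated /= card_ord => /andP[/andP[-> _] /forallP ->]. Qed.

Lemma not_special_leaf (i : 'I_n) :
  ~~ bg_special (G:=G) m -> centre_truncated -> ~~ ht (inr i).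
Proof.
rewrite /bg_special /centre_truncated /= !card_ord => + /andP[/eqP n1 /eqP m1].
have -> : (n == 1%N) && (n.+1 == 2%N) = true by rewrite n1.
rewrite /= negb_forall => /existsP[a]; case: (unliftP ord0 a) => [k ->|->]; last by rewrite m1.
have -> : k = i by apply: ord_inj; move: (ltn_ord k) (ltn_ord i) n1 => /=; lia.
by rewrite htrunc_inr.
Qed.

Lemma star_rel_elem r : ~~ bg_special (G:=G) m -> star_rel r -> kq_elem r.
Proof.
have comm_elem i : ~~ centre_truncated -> ~~ ht (inr i) -> kq_elem (comm_rel i).
  move=> nct nt; apply: kq_elem_add; apply: kq_elem_scale; apply: kq_elem_path.
    by case: (leaf_path_valid nt).
  by case: (centre_path_valid i nct).
move=> ns; case=> [i nct nt|i nct nt|i t|i ct|j nct nt|j nct nt].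
- exact: comm_elem.
- exact/kq_elem_scale/comm_elem.
- have nct : ~~ centre_truncated by apply: contraL t; apply: not_special_leaf.
  apply: kq_elem_path.
  have [V T] := centre_path_valid i nct; move: V T; rewrite /pvalid /ptgt /= composable_cat.
  by move=> -> ->; rewrite /= eqxx /qarrow /= htrunc_inl nct.
- apply: kq_elem_path; have nt := not_special_leaf i ns ct.
  rewrite /pvalid /= leaf_wordE -[[:: inr i]]/(nseq 1 (inr i)) -nseqD addn1.
  by case: (leaf_walk (m (leaf i)).+1 nt).
- by apply: kq_elem_path; rewrite /pvalid /= !eqxx /qarrow /= htrunc_inl nct nt.
- by apply: kq_elem_path; rewrite /pvalid /= !eqxx /qarrow /= htrunc_inl nct nt.
Qed.

Lemma relation_exists : (0 < n)%N -> exists r p, R r /\ r p != 0.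
Proof.
move=> n_gt0; pose i0 : 'I_n := Ordinal n_gt0.
have Rpath p : star_rel (kq_path p) -> exists r p, R r /\ r p != 0.
  by move=> Hp; exists (kq_path p), p; split; [apply/star_relE | apply: kq_path_self].
case: (boolP centre_truncated) => [ct|nct]; first exact: Rpath (star_trunc_centre i0 ct).
case: (boolP (ht (inr i0))) => [t|nt]; first exact: Rpath (star_trunc_leaf t).
exact: Rpath (star_leaf_centre nct nt).
Qed.

Lemma degenerate_relations_homogeneous :
  ~~ bg_special (G:=G) m -> centre_truncated || [forall i, ht (inr i)] ->
  exists L, forall r, R r -> len_homogeneous L r.
Proof.
move=> ns H; case: (boolP centre_truncated) => [ct|nct].
  have /andP[/eqP n1 _] := ct.
  pose i0 : 'I_n := cast_ord (esym n1) ord0.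
  exists (m (leaf i0)).+1 => r /star_relE.
  case=> [i nct|i nct|i t|i _|j nct|j nct]; try by rewrite ct in nct.
    by rewrite (negbTE (not_special_leaf i ns ct)) in t.
  rewrite (_ : i = i0); last by apply: ord_inj; have := ltn_ord i; have := ltn_ord i0; lia.
  by move=> p /kq_path_supp ->; rewrite /plen size_cat size_leaf_word addn1.
have all_t : forall i, ht (inr i) by move: H; rewrite (negbTE nct) => /forallP.
exists centre_len.+1 => r /star_relE.
case=> [i _|i _|i _|i ct|j _|j _]; rewrite ?all_t //; last by rewrite ct in nct.
by move=> p /kq_path_supp ->; rewrite /plen size_cat size_centre_word addn1.
Qed.

Lemma degenerate_not_homogeneous2 (d d' : nat) : (0 < n)%N -> ~~ bg_special (G:=G) m ->
  centre_truncated || [forall i, ht (inr i)] -> ~ homogeneous2_alg I d d'.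
Proof.
move=> n_gt0 ns deg [[S [[HS _] Sh]] [Nd Nd']].
have [L HL] := degenerate_relations_homogeneous ns deg.
have Relem r : R r -> kq_elem r by move/star_relE; apply: star_rel_elem.
by case: (homogeneous_of_relations Relem HL (relation_exists n_gt0) HS Sh).
Qed.

Lemma comm_rel_supp (k : 'I_n) p : comm_rel k p != 0 -> p = leaf_path k \/ p = centre_path k.
Proof. by case/kq_add_supp => /kq_scale_supp /kq_path_supp ->; [left|right]. Qed.

Lemma leaf_path_neq_centre (i k : 'I_n) : leaf_path i <> centre_path k.
Proof. by case=> _ E; move: (centre_word_has_centre k); rewrite -E leaf_word_no_centre. Qed.

Lemma comm_rel_centre (i : 'I_n) : comm_rel i (centre_path i) = - qcoef (G:=G) q (inl i).
Proof.
rewrite /comm_rel /kq_add /kq_scale kq_path_other; last by move/esym/leaf_path_neq_centre.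
by rewrite /kq_path eqxx mulr0 add0r mulr1.
Qed.

Lemma comm_rel_leaf (i : 'I_n) : comm_rel i (leaf_path i) = qcoef (G:=G) q (inr i).
Proof.
rewrite /comm_rel /kq_add /kq_scale (kq_path_other (leaf_path_neq_centre (i:=i) (k:=i))).
by rewrite /kq_path eqxx mulr0 addr0 mulr1.
Qed.

Lemma comm_rel_other (k : 'I_n) p : p.1 != k -> comm_rel k p = 0.
Proof. by move=> Hp; apply/eqP; apply: contraNT Hp => /comm_rel_supp[|] ->. Qed.

Definition no_truncated_pair : Prop := forall j : 'I_n, ht (inr j) -> ~~ ht (inr (ordS j)).

Lemma exists_untruncated_leaf : (0 < n)%N -> no_truncated_pair -> exists i, ~~ ht (inr i).
Proof.
move=> n_gt0 Htr; pose i0 : 'I_n := Ordinal n_gt0.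
by case: (boolP (ht (inr i0))) => [/Htr|] nt; [exists (ordS i0) | exists i0].
Qed.

Definition star_shape (d : nat) : Prop :=
  [/\ centre_len = d, forall i, ~~ ht (inr i) -> m (leaf i) = d & no_truncated_pair].

Lemma shape_centre_not_truncated d : (2 < d)%N -> star_shape d -> ~~ centre_truncated.
Proof.
move=> hd [EN _ _]; apply/negP => /andP[/eqP n1 /eqP m1].
by move: hd; rewrite -EN /centre_len m1 n1.
Qed.

Lemma conditions_star_shape d : (2 < d)%N -> (0 < n)%N ->
  [/\ (n %| d)%N, m ord0 = (d %/ n)%N &
      forall i : 'I_n,
        (m (leaf i) = 1%N \/ m (leaf i) = d) /\
        (m (leaf i) * m (leaf (ordS i)) = d \/ m (leaf i) * m (leaf (ordS i)) = d ^ 2)%N]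
  <-> star_shape d.
Proof.
move=> hd n_gt0; split=> [[n_d m0 Hl]|[EN Hlen Htr]].
  split; first by rewrite /centre_len m0 mulnC divnK.
    by move=> i; rewrite htrunc_inr; case: (Hl i) => -[->|->].
  move=> j; rewrite !htrunc_inr => /eqP mj; apply/negP => /eqP mj'.
  by case: (Hl j) => _; rewrite mj mj' => -[|] E; move: hd; rewrite -?E; nia.
have leaf_mult j : m (leaf j) = 1%N \/ m (leaf j) = d.
  by case: (boolP (ht (inr j))) => [|/Hlen]; [rewrite htrunc_inr => /eqP|]; [left|right].
split.
- by apply/dvdnP; exists (m ord0); rewrite -EN /centre_len mulnC.
- by rewrite -EN /centre_len mulKn.
- move=> i; split; first exact: leaf_mult.
  case: (boolP (ht (inr i))) => [t|/Hlen ->].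
    have /Hlen -> := Htr i t; move: t; rewrite htrunc_inr => /eqP ->.
    by left; rewrite mul1n.
  by case: (leaf_mult (ordS i)) => ->; [left; rewrite muln1 | right; rewrite mulnn].
Qed.

Section CentreNotTruncated.
Hypothesis nct : ~~ centre_truncated.
Hypothesis q_ok : @quantizing K G m q.

(* words containing a centre arrow and either a leaf arrow or more than one
   full turn around the centre; no factor of a special cycle is of this kind *)
Definition mixed (w : seq HE) : bool :=
  has is_centre_arrow w && (has is_leaf_arrow w || (centre_len < size w)%N).

Lemma not_mixed_centre_factor (w : seq HE) (i : 'I_n) : infix w (centre_word i) -> ~~ mixed w.
Proof.
move=> Hw; rewrite /mixed negb_and negb_or -leqNgt -(size_centre_word i) size_infix // andbT.
by apply/orP; right; apply: contraFN (centre_word_no_leaf i); apply: infix_has.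
Qed.

Lemma not_mixed_leaf_factor (w : seq HE) (i : 'I_n) : infix w (leaf_word i) -> ~~ mixed w.
Proof.
move=> Hw; rewrite /mixed negb_and; apply/orP; left.
by apply: contraFN (leaf_word_no_centre i); apply: infix_has.
Qed.

Lemma star_rel_shape r : star_rel r ->
  (exists k c, ~~ ht (inr k) /\ r = kq_scale c (comm_rel k)) \/
  (exists p : qpath Q, mixed p.2 /\ r = kq_path p).
Proof.
case=> [i _ nt|i _ nt|i _|i ct|j _ nt|j _ nt].
- by left; exists i, 1; rewrite kq_scale1.
- by left; exists i, (-1).
- right; exists (trunc_leaf_path i); split=> //.
  by rewrite /mixed /= has_cat centre_word_has_centre size_cat size_centre_word addn1 ltnSn orbT.
- by move: nct; rewrite ct.
- by right; exists (centre_leaf_path j).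
- by right; exists (leaf_centre_path j).
Qed.

Lemma star_rel_supp r p : star_rel r -> r p != 0 ->
  (exists2 k, ~~ ht (inr k) & p = leaf_path k \/ p = centre_path k) \/ mixed p.2.
Proof.
case/star_rel_shape => [[k [c [nt ->]]] /kq_scale_supp /comm_rel_supp Hp|[p0 [Hm ->]] /kq_path_supp ->].
  by left; exists k.
by right.
Qed.

Lemma centre_support x p : I x -> x p != 0 ->
  [\/ has is_leaf_arrow p.2, (centre_len < size p.2)%N |
      exists2 k, ~~ ht (inr k) & p.2 = centre_word k].
Proof.
move=> Ix Hp; apply: (@ideal_support_closed K Q R (fun t =>
  [\/ has is_leaf_arrow t, (centre_len < size t)%N | exists2 k, ~~ ht (inr k) & t = centre_word k])
  _ _ x Ix p Hp) => [l t t' [H|H|[k nt Et]]|r p0 Rr Hr].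
- by apply: Or31; rewrite !has_cat H orbT.
- by apply: Or32; rewrite !size_cat; lia.
- have [/eqP Hz|Hnz] := eqVneq (size l + size t')%N 0%N.
    by move: Hz; rewrite addn_eq0 !size_eq0 => /andP[/eqP -> /eqP ->]; rewrite cats0; apply: Or33; exists k.
  by apply: Or32; rewrite !size_cat Et size_centre_word; lia.
case: (star_rel_supp (proj1 (star_relE r) Rr) Hr) => [[k nt [->|->]]|/andP[_ /orP[]]].
- by apply: Or31; apply: leaf_word_has_leaf.
- by apply: Or33; exists k.
- by move=> ?; apply: Or31.
- by move=> ?; apply: Or32.
Qed.

Lemma not_special : ~~ bg_special (G:=G) m.
Proof. by apply: contra nct; apply: special_centre_truncated. Qed.

Lemma ideal_valid x p : I x -> x p != 0 -> pvalid p.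
Proof.
move=> Ix; apply: (@ideal_support_valid K Q R _ x Ix) => r p0 /star_relE Rr.
exact: (proj2 (star_rel_elem not_special Rr)).
Qed.

Lemma star_rel_vanish (i : 'I_n) r v w : star_rel r ->
  proper_infix w (centre_word i) || proper_infix w (leaf_word i) -> r (v, w) = 0.
Proof.
move=> Hr Hw; apply/eqP; apply: contraT => /(star_rel_supp Hr) [[k _ [[_ Ew]|[_ Ew]]]|Hm].
- move: Hw; rewrite Ew /proper_infix size_leaf_word => /orP[/andP[Hf _]|/andP[Hf]].
    by move: (infix_has Hf (leaf_word_has_leaf k)); rewrite centre_word_no_leaf.
  have /(mem_infix Hf) : inr k \in leaf_word k by rewrite leaf_wordE mem_nseq m_gt0 /=.
  by rewrite leaf_wordE mem_nseq => /andP[_ /eqP[->]]; rewrite size_nseq ltnn.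
- move: Hw; rewrite Ew /proper_infix !size_centre_word ltnn andbF /= => /andP[Hf _].
  by move: (infix_has Hf (centre_word_has_centre k)); rewrite leaf_word_no_centre.
- by case/orP: Hw => /andP[/=]; [move/not_mixed_centre_factor|move/not_mixed_leaf_factor];
    rewrite Hm.
Qed.

Lemma comm_balanced (i : 'I_n) x : ~~ ht (inr i) -> I x ->
  qcoef (G:=G) q (inr i) * x (centre_path i) + qcoef (G:=G) q (inl i) * x (leaf_path i) = 0.
Proof.
move=> nt Ix.
have [VC TC] := centre_path_valid i nct; have [VB TB] := leaf_path_valid nt.
have balance r : star_rel r ->
    qcoef (G:=G) q (inr i) * r (centre_path i) + qcoef (G:=G) q (inl i) * r (leaf_path i) = 0.
  case/star_rel_shape => [[k [c [_ ->]]]|[p [Hm ->]]]; rewrite /kq_scale.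
    have [<-|ki] := eqVneq k i; first by rewrite comm_rel_centre comm_rel_leaf; ring.
    by rewrite !comm_rel_other 1?eq_sym //; ring.
  rewrite !kq_path_other ?mulr0 ?addr0 // => E; rewrite -E /= in Hm.
    by move: Hm (not_mixed_leaf_factor (infix_refl (leaf_word i))) => ->.
  by move: Hm (not_mixed_centre_factor (infix_refl (centre_word i))) => ->.
have [_ ->] // := @ideal_balanced K Q R (centre_path i) (leaf_path i) _ _ erefl
  (etrans TC (esym TB)) VC VB (fun r v w Rr => star_rel_vanish v (proj1 (star_relE r) Rr))
  (fun r Rr => balance r (proj1 (star_relE r) Rr)) x Ix.
Qed.

Lemma qcoef_centre_neq0 (i : 'I_n) : ~~ ht (inr i) -> qcoef (G:=G) q (inl i) != 0.
Proof. by move=> nt; apply: q_ok; rewrite //= htrunc_inl. Qed.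

Lemma qcoef_leaf_neq0 (i : 'I_n) : ~~ ht (inr i) -> qcoef (G:=G) q (inr i) != 0.
Proof. by move=> nt; apply: q_ok; rewrite //= htrunc_inl. Qed.

Lemma centre_cycle_generator S (i : 'I_n) : generates S I -> ~~ ht (inr i) ->
  exists2 s, S s & s (centre_path i) != 0 /\ s (leaf_path i) != 0.
Proof.
move=> HS nt.
have Ic : I (comm_rel i) by apply/ideal_gen/star_relE/star_comm.
have Hc : comm_rel i (centre_path i) != 0 by rewrite comm_rel_centre oppr_eq0 qcoef_centre_neq0.
have [s [v [w [Ss Hs Hw]]]] := generator_factor HS Ic Hc; have Is := generates_mem HS Ss.
have Ew : w = centre_word i.
  case: (centre_support Is Hs) => [H|H|[k _ Ek]] /=.
  - by move: (infix_has Hw H); rewrite centre_word_no_leaf.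
  - by move: (size_infix Hw) H; rewrite size_centre_word /=; lia.
  - by move: Ek => /= Ek; apply: (infix_size_eq Hw); rewrite Ek !size_centre_word.
have Ev : v = i.
  by have [t Et] := centre_word_head i; move: (ideal_valid Is Hs); rewrite Ew Et => /pvalid_src.
have HsC : s (centre_path i) != 0 by rewrite /centre_path -Ew -Ev.
exists s => //; split=> //; apply/eqP => Z.
move: (comm_balanced nt Is); rewrite Z mulr0 addr0 => /eqP; rewrite mulf_eq0.
by rewrite (negbTE (qcoef_leaf_neq0 nt)) (negbTE HsC).
Qed.

Lemma generator_lengths S (P : nat -> Prop) (i : 'I_n) : generates S I ->
  (forall s, S s -> exists2 l, P l & len_homogeneous l s) -> ~~ ht (inr i) ->
  P centre_len /\ m (leaf i) = centre_len.
Proof.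
move=> HS Sh nt; have [s Ss [HC HB]] := centre_cycle_generator HS nt.
have [l Pl Hl] := Sh s Ss; move: (Hl _ HC) (Hl _ HB).
by rewrite /plen /= size_centre_word size_leaf_word => EC ->; rewrite EC.
Qed.

Lemma truncated_successor S : generates S I ->
  (forall s, S s -> exists2 l, l != centre_len.+1 & len_homogeneous l s) ->
  no_truncated_pair.
Proof.
move=> HS Sh j tj; apply/negP => tj'.
have Ir : I (kq_path (trunc_leaf_path j)) by apply/ideal_gen/star_relE/star_trunc_leaf.
have [s [v [w [Ss Hs Hw]]]] := generator_factor HS Ir (kq_path_self _).
rewrite /= centre_word_rot in Hw.
case: (centre_support (generates_mem HS Ss) Hs) => /= [H|H|[k nt Ek]].
- by move: (infix_has Hw H); rewrite /= centre_word_no_leaf.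
- have [l Hl Hhom] := Sh s Ss; move: (size_infix Hw) (Hhom _ Hs) Hl H.
  by rewrite /plen /= size_centre_word => ? <- /eqP; lia.
- move: Hw; rewrite infix_consl Ek => /orP[].
    have [t ->] := centre_word_head k; rewrite prefix_cons => /andP[/eqP[Ekj] _].
    by move: nt; rewrite Ekj tj.
  move/infix_size_eq; rewrite !size_centre_word => /(_ erefl)/centre_word_inj Ek'.
  by move: nt; rewrite Ek' tj'.
Qed.

Inductive gens : (qpath Q -> K) -> Prop :=
| gen_comm i : ~~ ht (inr i) -> gens (comm_rel i)
| gen_centre_leaf j : ~~ ht (inr (ordS j)) -> gens (kq_path (centre_leaf_path j))
| gen_leaf_centre j : ~~ ht (inr j) -> gens (kq_path (leaf_centre_path j)).

Lemma gens_star_rel x : gens x -> star_rel x.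
Proof.
by case=> [i|j|j] nt; [apply: star_comm | apply: star_centre_leaf | apply: star_leaf_centre].
Qed.

(* The monomial relation at a truncated leaf followed by a non-truncated one
   is a consequence of the generators: multiply the commutativity relation of
   edge k+1 on the left by the arrow v_k -> v_(k+1) at the centre. *)
Lemma trunc_leaf_redundant (k : 'I_n) : ~~ ht (inr (ordS k)) ->
  in_ideal gens (kq_path (trunc_leaf_path k)).
Proof.
move=> nt; set k' := ordS k.
have [VB TB] := leaf_path_valid nt; have [VC TC] := centre_path_valid k' nct.
pose a : qpath Q := (k, [:: inl k]).
have Va : pvalid a by rewrite /pvalid /= eqxx /qarrow /= htrunc_inl nct.
pose b : qpath Q := (k', nseq (m (leaf k')).-1 (inr k')).
have Vb : pvalid b by case: (leaf_walk (m (leaf k')).-1 nt).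
have Vab : pvalid (centre_leaf_path k) by rewrite /pvalid /= !eqxx /qarrow /= htrunc_inl nct nt.
have X1 : in_ideal gens (kq_mul (kq_path a) (comm_rel k')).
  by apply: ideal_lmul; [apply: kq_elem_path | apply/ideal_gen/gen_comm].
have X2 : in_ideal gens (kq_mul (kq_path (centre_leaf_path k)) (kq_path b)).
  by apply: ideal_rmul; [apply: kq_elem_path | apply/ideal_gen/gen_centre_leaf].
rewrite /comm_rel kq_mul_addr !kq_mul_scaler !kq_mul_path // ?TB ?TC // in X1.
rewrite kq_mul_path //= in X2.
have Eb : inl k :: inr k' :: b.2 = inl k :: leaf_word k'.
  by rewrite /= leaf_wordE; case: (m (leaf k')) (m_gt0 (leaf k')).
rewrite Eb in X2.
set PB := kq_path _ in X2; set PC := kq_path ((k, inl k :: centre_word k') : qpath Q) in X1.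
set qB := qcoef (G:=G) q (inr k') in X1; set qC := qcoef (G:=G) q (inl k') in X1.
have -> : kq_path (trunc_leaf_path k) =
    kq_scale (- qC^-1) (kq_add (kq_add (kq_scale qB PB) (kq_scale (- qC) PC)) (kq_scale (- qB) PB)).
  rewrite /trunc_leaf_path centre_word_rot -/k' -/PC.
  apply: functional_extensionality => p; rewrite /kq_scale /kq_add.
  by field; apply: qcoef_centre_neq0.
by apply/ideal_scale/ideal_add => //; apply: ideal_scale.
Qed.

Lemma gens_generate : no_truncated_pair -> generates gens I.
Proof.
move=> Htr; split; first by move=> x /gens_star_rel; apply: star_rel_elem not_special.
move=> x; split; apply: ideal_mono => r; first by move/gens_star_rel/star_relE; apply: ideal_gen.
case/star_relE => [i _ nt|i _ nt|i t|i ct|j _ nt|j _ nt].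
- exact/ideal_gen/gen_comm.
- exact/ideal_scale/ideal_gen/gen_comm.
- exact/trunc_leaf_redundant/Htr.
- by move: nct; rewrite ct.
- exact/ideal_gen/gen_centre_leaf.
- exact/ideal_gen/gen_leaf_centre.
Qed.

Lemma gens_homogeneous L : centre_len = L -> (forall i, ~~ ht (inr i) -> m (leaf i) = L) ->
  forall x, gens x -> len_homogeneous 2 x \/ len_homogeneous L x.
Proof.
move=> EN Hlen x [i nt|j _|j _]; try by left; apply: kq_path_homogeneous.
right => p /comm_rel_supp[->|->]; rewrite /plen /=.
  by rewrite size_leaf_word Hlen.
by rewrite size_centre_word.
Qed.

Lemma gens_support s v w : gens s -> s (v, w) != 0 ->
  (s = kq_path (v, w) /\ size w = 2 /\ has is_leaf_arrow w) \/
  (exists k, [/\ ~~ ht (inr k), s = comm_rel k & w = leaf_word k \/ w = centre_word k]).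
Proof.
case=> [k nt|j _|j _].
- by move/comm_rel_supp => [[_ ->]|[_ ->]]; right; exists k; split=> //; [left|right].
- by move/kq_path_supp; rewrite /centre_leaf_path => -[-> ->]; left.
- by move/kq_path_supp; rewrite /leaf_centre_path => -[-> ->]; left.
Qed.

Lemma gens_minimal d : (2 < d)%N -> generates gens I -> centre_len = d ->
  (forall i, ~~ ht (inr i) -> m (leaf i) = d) -> minimal_generating gens I.
Proof.
move=> hd Hgen EN Hlen; apply: minimal_of_witness => // x.
have monomial_witness (p0 : qpath Q) : pvalid p0 -> size p0.2 = 2 ->
    exists p, (kq_path p0 : qpath Q -> K) p != 0 /\
    forall s v w, gens s -> s (v, w) != 0 -> infix w p.2 -> s = kq_path p0.
  move=> V0 S0; exists p0; split=> [|s v w Gs Hs Hw]; first exact: kq_path_self.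
  case: (gens_support Gs Hs) => [[-> [Sw _]]|[k [nt _ Ew]]]; last first.
    by move: (size_infix Hw); rewrite S0; case: Ew => ->; rewrite ?size_leaf_word ?Hlen ?size_centre_word ?EN; lia.
  have Ew := infix_size_eq Hw (etrans Sw (esym S0)).
  have Vs := ideal_valid (generates_mem Hgen Gs) Hs.
  move: p0 V0 S0 Hw Ew => [v0 [|c w0]] // V0 _ _ Ew; rewrite Ew in Vs *.
  by rewrite (pvalid_src Vs) (pvalid_src V0).
case=> [i nt|j nt|j nt].
- exists (centre_path i); split=> [|s v w Gs Hs Hw].
    by rewrite comm_rel_centre oppr_eq0 qcoef_centre_neq0.
  case: (gens_support Gs Hs) => [[_ [_ Hl]]|[k [_ -> [Ew|Ew]]]].
  + by move: (infix_has Hw Hl); rewrite centre_word_no_leaf.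
  + move: Hw; rewrite Ew => /infix_has/(_ (leaf_word_has_leaf k)).
    by rewrite centre_word_no_leaf.
  + move: Hw; rewrite Ew => /infix_size_eq; rewrite !size_centre_word.
    by move=> /(_ erefl)/centre_word_inj ->.
- by apply: monomial_witness => //; rewrite /pvalid /= !eqxx /qarrow /= htrunc_inl nct nt.
- by apply: monomial_witness => //; rewrite /pvalid /= !eqxx /qarrow /= htrunc_inl nct nt.
Qed.

Theorem shape_homogeneous2 d : (2 < d)%N -> (0 < n)%N -> star_shape d ->
  homogeneous2_alg I 2 d.
Proof.
move=> hd n_gt0 [EN Hlen Htr]; have Hgen := gens_generate Htr.
have [i1 nt1] := exists_untruncated_leaf n_gt0 Htr.
split; [exists gens; split | split].
- exact: gens_minimal hd Hgen EN Hlen.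
- exact: gens_homogeneous EN Hlen.
- move=> [S [HS Sh]].
  have [N_2 _] := generator_lengths (P := fun l => l = 2%N) HS
    (fun s Ss => ex_intro2 _ _ 2%N erefl (Sh s Ss)) nt1.
  by move: hd; rewrite -EN N_2.
- have Ir : I (kq_path (leaf_centre_path i1)) by apply/ideal_gen/star_relE/star_leaf_centre.
  exact: short_element_not_homogeneous Ir (kq_path_self _) hd.
Qed.

Theorem homogeneous2_shape d : (2 < d)%N -> (exists i, ~~ ht (inr i)) ->
  homogeneous2_alg I 2 d -> star_shape d.
Proof.
move=> hd [i0 nt0] [[S [[HS _] Sh]] [N2 Nd]].
have Sh' s : S s -> exists2 l, l = 2%N \/ l = d & len_homogeneous l s.
  by case/Sh => H; [exists 2%N; [left|] | exists d; [right|]].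
have lengths i : ~~ ht (inr i) -> (centre_len = 2%N \/ centre_len = d) /\ m (leaf i) = centre_len.
  exact: generator_lengths HS Sh'.
have EN : centre_len = d.
  case: (lengths i0 nt0) => [[N_2|//] _]; case: N2.
  have n_le2 : (n <= 2)%N by move: N_2 (m_gt0 ord0); rewrite /centre_len; nia.
  have Htr : no_truncated_pair.
    by move=> j tj; rewrite (ordS_other (i := i0) n_le2) //; apply: contraTneq tj => ->.
  exists gens; split; first exact: gens_generate Htr.
  by move=> x /(gens_homogeneous N_2 (fun i nt => etrans (lengths i nt).2 N_2)) [].
split=> // [i nt|]; first by rewrite (lengths i nt).2.
apply: (truncated_successor HS) => s Ss; have [l Hl Hh] := Sh' s Ss.
by exists l => //; rewrite EN; case: Hl => ->; apply/eqP; lia.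
Qed.

End CentreNotTruncated.

End Star.

Lemma loop_ideal_homogeneous (K : fieldType) : homogeneous_alg (@loop_ideal K) 2.
Proof.
exists (fun x => x = kq_path ((tt, [:: tt; tt]) : qpath loop_quiver)); split.
  by split=> // x ->; apply: kq_elem_path.
by move=> x -> p; apply: kq_path_homogeneous.
Qed.

(* Corollary 2.6: the special graph A_2 is 2-homogeneous, the degenerate stars
   are excluded, and otherwise both sides are equivalent to the shape. *)
Theorem corollary2p6 (K : fieldType) (d n : nat)
    (m : 'I_n.+1 -> nat) (q : 'I_n -> 'I_n.+1 -> K) :
  (2 < d)%N -> (0 < n)%N ->
  (forall a, (0 < m a)%N) ->
  @quantizing K (star n) m q ->
  @bga_homogeneous2 K (star n) m q 2 d <->
  [/\ (n %| d)%N,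
      m ord0 = (d %/ n)%N &
      forall i : 'I_n,
        (m (leaf i) = 1%N \/ m (leaf i) = d) /\
        (m (leaf i) * m (leaf (ordS i)) = d \/ m (leaf i) * m (leaf (ordS i)) = d ^ 2)%N].
Proof.
move=> hd n_gt0 m_gt0 q_ok; rewrite (conditions_star_shape m hd n_gt0) /bga_homogeneous2.
split=> [|shape].
  case: ifP => [_ [_ [not2 _]] | /negbT ns H]; first by case: not2; apply: loop_ideal_homogeneous.
  case: (boolP (centre_truncated m || [forall i, htrunc (G:=star n) m (inr i)])) => [deg|].
    by case: (degenerate_not_homogeneous2 n_gt0 ns deg H).
  rewrite negb_or => /andP[nct /forallPn[i nt]].
  by apply: (homogeneous2_shape m_gt0 nct q_ok hd) H; exists i.
have nct := shape_centre_not_truncated hd shape.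
rewrite (negbTE (not_special nct)) /=.
exact (shape_homogeneous2 m_gt0 nct q_ok hd n_gt0 shape).
Qed.
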